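(* Let $\mathbb{F}$ be a field of characteristic $2$ with at least $4$ elements, and let $B\in M_3(\mathbb{F})$ be a non-derogative matrix with trace $u_2$. Then for every $a\in\mathbb{F}$ with $a\neq u_2$ and $a\neq u_2+1$, there exist $N,D\in M_3(\mathbb{F})$ with $B=N+D$, $N^2=0$, and $D$ diagonalizable with eigenvalues $a$, $a+1$, $u_2+1$.
   Context: A square matrix is non-derogative if its minimal polynomial equals its characteristic polynomial. A matrix $D\in M_n(\mathbb{F})$ is diagonalizable if there exists an invertible $U\in M_n(\mathbb{F})$ such that $U^{-1}DU$ is diagonal. *)

From HB Require Import structures.
From mathcomp Require Import all_boot all_order all_algebra.
Set Implicit Arguments. Unset Strict Implicit. Unset Printing Implicit Defensive.
Import Order.TTheory GRing.Theory Num.Theory.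
Local Open Scope ring_scope.

Definition non_derogative (F : fieldType) (n : nat) (A : 'M[F]_n.+1) : Prop :=
  mxminpoly A = char_poly A.

(* A non-derogative 3 x 3 matrix B has a cyclic vector v; in the basis
   v, vB, vB^2 it becomes the companion matrix of its characteristic
   polynomial p. Let q = (X - a)(X - a - 1)(X - tr B - 1), whose roots are
   distinct by the hypotheses on a. In characteristic 2 the X^2 coefficients of
   p and q are both -tr B, so the companion matrices of p and q differ only in
   their last row, with a zero in the last column: their difference squares to
   zero. The companion matrix of q is diagonalizable since q splits with simple
   roots. *)
From HB Require Import structures.
From mathcomp Require Import all_boot all_order all_algebra zify ring.
From Stdlib Require Import Classical.
Import GRing.Theory.
Local Open Scope ring_scope.
Set Implicit Arguments. Unset Strict Implicit. Unset Printing Implicit Defensive.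

Lemma size2_polyE (F : fieldType) (p : {poly F}) : (size p <= 2)%N ->
  p = (p`_0)%:P + p`_1 *: 'X.
Proof.
move=> sp; apply/polyP => -[|[|i]]; rewrite coefD coefZ coefC coefX //=.
- by rewrite mulr0 addr0.
- by rewrite mulr1 add0r.
by rewrite mulr0 addr0 nth_default // (leq_trans sp).
Qed.

Lemma monic_size2E (F : fieldType) (p : {poly F}) : p \is monic -> size p = 2 ->
  p = 'X - (- p`_0)%:P.
Proof.
move=> pm sp; rewrite {1}(size2_polyE (eq_leq sp)).
by move: pm; rewrite monicE lead_coefE sp => /eqP ->; rewrite scale1r polyCN opprK addrC.
Qed.

Section KrylovFree.
Variables (F : fieldType) (n : nat) (A : 'M[F]_n.+1).
Implicit Types (u v w y z : 'rV[F]_n.+1) (p q r : {poly F}) (l : F).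

(* The vectors v, vA, ..., vA^(k-1) are linearly independent; for k = n.+1
   this says that v is a cyclic vector of A. *)
Definition krylov_free v k :=
  forall r, (size r <= k)%N -> v *m horner_mx A r = 0 -> r = 0.

Lemma mulmx_hornerM v p q :
  v *m horner_mx A (p * q) = v *m horner_mx A p *m horner_mx A q.
Proof. by rewrite rmorphM /= -mulmxE mulmxA. Qed.

Lemma mulmx_horner_XsubC v l : v *m horner_mx A ('X - l%:P) = v *m A - l *: v.
Proof. by rewrite rmorphB /= horner_mx_X horner_mx_C mulmxBr mul_mx_scalar. Qed.

Lemma mulmx_horner_size2 v r : (size r <= 2)%N ->
  v *m horner_mx A r = r`_0 *: v + r`_1 *: (v *m A).
Proof.
move=> sr; rewrite [in LHS](size2_polyE sr) rmorphD /= linearZ /=.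
by rewrite horner_mx_C horner_mx_X mulmxDr mul_mx_scalar scalemxAr.
Qed.

Lemma mulmx_horner_eigenvector v l p :
  v *m A = l *: v -> v *m horner_mx A p = p.[l] *: v.
Proof.
move=> vA; elim/poly_ind: p => [|p c IHp].
  by rewrite rmorph0 mulmx0 horner0 scale0r.
rewrite rmorphD rmorphM /= horner_mx_X horner_mx_C -mulmxE mulmxDr mulmxA IHp.
by rewrite -scalemxAl vA mul_mx_scalar scalerA hornerMXaddC scalerDl mulrC.
Qed.

Lemma eigenvector_annihilator_root z l r : z != 0 -> z *m A = l *: z ->
  z *m horner_mx A r = 0 -> root r l.
Proof.
move=> nz zA; rewrite (mulmx_horner_eigenvector _ zA) => /eqP.
by rewrite scaler_eq0 (negPf nz) orbF.
Qed.

Lemma eigenvector_of_XsubC_annihilator v l :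
  v *m horner_mx A ('X - l%:P) = 0 -> v *m A = l *: v.
Proof. by rewrite mulmx_horner_XsubC => /eqP; rewrite subr_eq0 => /eqP. Qed.

Lemma eigenvector_of_linear_annihilator v r : r != 0 -> (size r <= 2)%N ->
  v *m horner_mx A r = 0 -> exists l, v *m A = l *: v.
Proof.
move=> rn0 sr; rewrite mulmx_horner_size2 //.
have [r1|r1] := eqVneq r`_1 0.
  rewrite r1 scale0r addr0 => /eqP; rewrite scaler_eq0 => /orP[/eqP r0|/eqP ->].
    by case/eqP: rn0; rewrite (size2_polyE sr) r0 r1 scale0r addr0.
  by exists 0; rewrite mul0mx scaler0.
move=> /eqP; rewrite addr_eq0 => /eqP vA; exists (- r`_0 / r`_1).
by apply: (scalerI r1); rewrite scalerA mulrCA mulfV // mulr1 scaleNr vA opprK.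
Qed.

Lemma krylov_free2_of_non_eigenvector v :
  (forall l, v *m A != l *: v) -> krylov_free v 2.
Proof.
move=> nev r sr vr; apply/eqP/negPn/negP => rn0.
by have [l /eqP] := eigenvector_of_linear_annihilator rn0 sr vr; apply/negP.
Qed.

Lemma exists_non_eigenvector : ~~ is_scalar_mx A ->
  exists v, forall l, v *m A != l *: v.
Proof.
move=> nsA; apply: NNPP => /not_ex_all_not all_eigen.
have eigen v : exists l, v *m A = l *: v.
  apply: NNPP => /not_ex_all_not nev; apply: (all_eigen v) => l.
  by apply/negP => /eqP; exact: nev.
have offdiag i j : i != j -> A i j = 0.
  move=> ij; have [l] := eigen (delta_mx 0 i); rewrite -rowE.
  by move/(congr1 (fun v : 'rV_n.+1 => v 0 j)); rewrite !mxE eq_sym (negPf ij) mulr0.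
have [m] := eigen (const_mx 1); move/(congr1 (fun v : 'rV_n.+1 => v 0 _)) => colsum.
case/is_scalar_mxP: nsA; exists m; apply/matrixP => i j; rewrite mxE.
have [<-|ij] := eqVneq i j; last by rewrite offdiag // (negPf ij).
move: (colsum i); rewrite !mxE (bigD1 i) //= big1 => [|k ki]; last first.
  by rewrite mxE offdiag ?mulr0.
by rewrite !mxE mul1r addr0 mulr1.
Qed.

Lemma krylov_free_monic_annihilator v k : krylov_free v k -> ~ krylov_free v k.+1 ->
  exists q, [/\ q \is monic, size q = k.+1 & v *m horner_mx A q = 0].
Proof.
move=> vk nvk.
have [r [sr vr rn0]] :
    exists r, [/\ (size r <= k.+1)%N, v *m horner_mx A r = 0 & r != 0].
  apply: NNPP => none; apply: nvk => r sr vr.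
  by apply/eqP/negPn/negP => rn0; apply: none; exists r.
have {sr}sr : size r = k.+1.
  by apply/eqP; rewrite eqn_leq sr ltnNge; apply: contra rn0 => /vk/(_ vr) ->.
have lr0 : lead_coef r != 0 by rewrite lead_coef_eq0.
exists ((lead_coef r)^-1 *: r); split.
- by rewrite monicE lead_coefZ mulVf.
- by rewrite size_scale ?invr_eq0.
- by rewrite linearZ /= -scalemxAr vr scaler0.
Qed.

Lemma krylov_free_annihilator_dvdp v k q r : krylov_free v k ->
  q != 0 -> (size q <= k.+1)%N ->
  v *m horner_mx A q = 0 -> v *m horner_mx A r = 0 -> q %| r.
Proof.
move=> vk qn0 sq vq vr; apply/modp_eq0P/vk.
  by rewrite -ltnS (leq_trans (ltn_modpN0 r qn0)).
have -> : r %% q = r - r %/ q * q.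
  by apply/eqP; rewrite eq_sym subr_eq addrC -divp_eq.
by rewrite rmorphB mulmxBr vr mulrC mulmx_hornerM vq mul0mx subrr.
Qed.

Lemma krylov_free_jordan_chain y z l k : z != 0 -> z *m A = l *: z ->
  y *m horner_mx A (('X - l%:P) ^+ k) = z -> krylov_free y k.+1.
Proof.
move=> nz zA; elim: k y => [|k IHk] y.
  rewrite expr0 rmorph1 mulmx1 => -> r sr zr.
  have := eigenvector_annihilator_root nz zA zr.
  by rewrite (size1_polyC sr) rootC => /eqP ->.
rewrite exprS mulmx_hornerM => yz r sr yr.
have /factor_theorem[t rt] : root r l.
  apply: (eigenvector_annihilator_root nz zA).
  by rewrite -yz -!mulmx_hornerM mulrA mulrC mulmx_hornerM yr mul0mx.
suff t0 : t = 0 by rewrite rt t0 mul0r.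
apply: (IHk _ yz).
  have [->|tn0] := eqVneq t 0; first by rewrite size_poly0.
  by move: sr; rewrite rt size_Mmonic ?monicXsubC // size_XsubC addn2.
by rewrite -mulmx_hornerM mulrC -rt.
Qed.

Lemma krylov_free_add_eigenvector u z q l k : krylov_free u k ->
  u *m horner_mx A q = 0 -> (size q <= k.+1)%N ->
  z != 0 -> z *m A = l *: z -> ~~ root q l -> krylov_free (u + z) k.+1.
Proof.
move=> uk uq sq nz zA ql r sr uzr.
have qn0 : q != 0 by apply: contraNneq ql => ->; rewrite root0.
have sqk : (k < size q)%N by rewrite ltnNge; apply: contra qn0 => /uk/(_ uq) ->.
have rl : root r l.
  have : (u + z) *m horner_mx A (r * q) = 0 by rewrite mulmx_hornerM uzr mul0mx.
  rewrite mulmxDl mulrC mulmx_hornerM uq mul0mx add0r.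
  rewrite (mulmx_horner_eigenvector _ zA) hornerM => /eqP.
  by rewrite scaler_eq0 (negPf nz) orbF mulf_eq0 -!rootE (negPf ql).
have ur : u *m horner_mx A r = 0.
  by move: uzr; rewrite mulmxDl (mulmx_horner_eigenvector _ zA) (eqP rl) scale0r addr0.
rewrite -(divpK (krylov_free_annihilator_dvdp uk qn0 sq uq ur)) in sr rl *.
have [->|dn0] := eqVneq (r %/ q) 0; first by rewrite mul0r.
rewrite rootM (negPf ql) orbF in rl.
move: sr sqk (root_size_gt1 dn0 rl); rewrite size_mul // => sr sqk d2; exfalso.
(* generalize the sizes so that lia sees syntactically equal atoms *)
by move: sqk sr d2; move: (size q) (size (r %/ q)) => b a; lia.
Qed.

Lemma krylov_free3_of_distinct_roots v w z l mu : krylov_free v 2 -> mu != l ->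
  v *m horner_mx A (('X - mu%:P) * ('X - l%:P)) = 0 ->
  w *m horner_mx A (('X - mu%:P) * ('X - l%:P)) = z -> z != 0 -> z *m A = l *: z ->
  krylov_free (w *m horner_mx A ('X - mu%:P) + v *m horner_mx A ('X - l%:P)) 3.
Proof.
move=> v2 nml vq wz nz zA; rewrite mulmx_hornerM in wz.
apply: (krylov_free_add_eigenvector (q := ('X - l%:P) ^+ 2) (l := mu)).
- by apply: (krylov_free_jordan_chain nz zA); rewrite expr1.
- by rewrite exprS expr1 mulmx_hornerM wz mulmx_horner_XsubC zA subrr.
- by rewrite size_exp_XsubC.
- by apply/eqP => /v2; rewrite size_XsubC => /(_ isT) /eqP; rewrite polyXsubC_eq0.
- by apply: eigenvector_of_XsubC_annihilator; rewrite -mulmx_hornerM mulrC.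
- by rewrite root_exp_XsubC.
Qed.

End KrylovFree.

Lemma non_derogative_horner_neq0 (F : fieldType) n (A : 'M[F]_n.+1) (r : {poly F}) :
  non_derogative A -> r != 0 -> (size r <= n.+1)%N -> horner_mx A r != 0.
Proof.
move=> ndA rn0 sr; apply/eqP => /mxminpoly_min; rewrite ndA => /(dvdp_leq rn0).
by rewrite size_char_poly => /leq_trans/(_ sr); rewrite ltnn.
Qed.

Lemma non_derogative_not_scalar (F : fieldType) n (A : 'M[F]_n.+2) :
  non_derogative A -> ~~ is_scalar_mx A.
Proof.
move=> ndA; apply/is_scalar_mxP => -[m Am].
have := non_derogative_horner_neq0 ndA (negbT (polyXsubC_eq0 m)).
by rewrite size_XsubC rmorphB /= horner_mx_X horner_mx_C Am subrr eqxx => /(_ isT).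
Qed.

(* If a non-eigenvector v has a monic annihilator q of degree 2, any nonzero
   z = w q(A) is an eigenvector, for some l. A cyclic vector is then v + z if
   q(l) != 0, w if q = (X - l)^2, and a sum of two Jordan-chain vectors if l is
   a simple root of q. *)
Lemma non_derogative3_cyclic_vector (F : fieldType) (A : 'M[F]_3) :
  non_derogative A -> exists v, krylov_free A v 3.
Proof.
move=> ndA; have [v nev] := exists_non_eigenvector (non_derogative_not_scalar ndA).
have v2 := krylov_free2_of_non_eigenvector nev.
have [v3|nv3] := classic (krylov_free A v 3); first by exists v.
have [q [qm sq vq]] := krylov_free_monic_annihilator v2 nv3.
have qn0 : q != 0 := monic_neq0 qm.
have [_ /submxP[w ->] zn0] :=
  rowV0Pn (non_derogative_horner_neq0 ndA qn0 (eq_leq sq)).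
set z := w *m horner_mx A q in zn0 *.
have qA : q %| char_poly A.
  apply: (krylov_free_annihilator_dvdp v2 qn0 (eq_leq sq) vq).
  by rewrite Cayley_Hamilton mulmx0.
have [l zA] : exists l, z *m A = l *: z.
  have sd : size (char_poly A %/ q) = 2 by rewrite size_divp // size_char_poly sq.
  apply: (eigenvector_of_linear_annihilator (r := char_poly A %/ q)); rewrite ?sd //.
    by rewrite -size_poly_eq0 sd.
  by rewrite -mulmx_hornerM divpKC // Cayley_Hamilton mulmx0.
have [/factor_theorem[t qt]|nql] := boolP (root q l); last first.
  by exists (v + z); apply: (krylov_free_add_eigenvector v2 vq _ zn0 zA nql); rewrite sq.
have [mu tE] : exists mu, t = 'X - mu%:P.
  have tm : t \is monic by rewrite -(monicMr t (monicXsubC l)) -qt.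
  exists (- t`_0); apply: monic_size2E => //.
  by move: sq; rewrite qt size_Mmonic ?monic_neq0 ?monicXsubC // size_XsubC addn2 => -[].
rewrite {t}tE in qt; subst q.
have [ml|nml] := eqVneq mu l.
  by exists w; apply: (krylov_free_jordan_chain zn0 zA); rewrite /z ml expr2.
by eexists; apply: (krylov_free3_of_distinct_roots (w := w) v2 nml vq _ zn0 zA).
Qed.

Definition companion_mx (F : fieldType) m (p : {poly F}) : 'M[F]_m :=
  \matrix_(i, j) if i == m.-1 :> nat then - p`_j else (i.+1 == j :> nat)%:R.

Lemma char_poly_companion_mx (F : fieldType) m (p : {poly F}) :
  p \is monic -> size p = m.+1 -> char_poly (companion_mx m p) = p.
Proof. by move=> pm /(congr1 predn) /= sp; case: m / sp; exact: companionmxK. Qed.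

Lemma rVpoly_companion_mx_row (F : fieldType) n (p : {poly F}) (i : 'I_n.+1) :
  p \is monic -> size p = n.+2 ->
  rVpoly (row i (companion_mx n.+1 p)) =
  if (i == n :> nat) then 'X^(n.+1) - p else 'X^(i.+1).
Proof.
move=> pm sp; apply/polyP => k; rewrite coef_rVpoly.
case: insubP => [j _ <- | ]; rewrite ?mxE /=.
  case: eqP => _; last by rewrite coefXn eq_sym.
  by rewrite coefB coefXn ltn_eqF // sub0r.
rewrite -leqNgt => gek; case: eqP => [_|/eqP ni].
  rewrite coefB coefXn; have [->|kn] := eqVneq k n.+1.
    by move: pm; rewrite monicE lead_coefE sp => /eqP ->; rewrite subrr.
  by rewrite nth_default ?subr0 // sp ltn_neqAle eq_sym kn.
by rewrite coefXn gtn_eqF // (leq_trans _ gek) // ltnS ltn_neqAle ni -ltnS ltn_ord.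
Qed.

Lemma companion_mx_sub_sqr (F : fieldType) n (p q : {poly F}) : p`_n = q`_n ->
  (companion_mx n.+1 p - companion_mx n.+1 q) *m
  (companion_mx n.+1 p - companion_mx n.+1 q) = 0.
Proof.
move=> pq; apply/matrixP => i j; rewrite !mxE big1 // => k _; rewrite !mxE /=.
have [kn|_] := eqVneq (k : nat) n; last by rewrite subrr mulr0.
by rewrite kn pq; case: ifP; rewrite subrr mul0r.
Qed.

Section KrylovMatrix.
Variables (F : fieldType) (n : nat) (A : 'M[F]_n.+1).

Definition krylovmx (v : 'rV[F]_n.+1) : 'M[F]_n.+1 := \matrix_i (v *m A ^+ i).

Lemma mulmx_krylovmx u v : u *m krylovmx v = v *m horner_mx A (rVpoly u).
Proof.
rewrite mulmx_sum_row {2}[u]row_sum_delta linear_sum rmorph_sum mulmx_sumr.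
apply: eq_bigr => i _; rewrite rowK linearZ /= rVpoly_delta -mul_polyC rmorphM.
by rewrite rmorphXn /= horner_mx_C horner_mx_X -mulmxE mul_scalar_mx scalemxAr.
Qed.

Lemma krylovmx_unit v : krylov_free A v n.+1 -> krylovmx v \in unitmx.
Proof.
move=> vn; rewrite unitmxE unitfE; apply/negP => /det0P[u un0].
rewrite mulmx_krylovmx => /(vn (rVpoly u) (size_poly _ _)) u0.
by case/eqP: un0; rewrite -[u]rVpolyK u0 linear0.
Qed.

Lemma krylovmx_companion v :
  krylovmx v *m A = companion_mx n.+1 (char_poly A) *m krylovmx v.
Proof.
apply/row_matrixP => i; rewrite !row_mul rowK mulmx_krylovmx.
rewrite rVpoly_companion_mx_row ?char_poly_monic ?size_char_poly //.
rewrite -mulmxA mulmxE -exprSr; case: eqP => [->|_].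
  by rewrite rmorphB rmorphXn /= horner_mx_X Cayley_Hamilton subr0.
by rewrite rmorphXn /= horner_mx_X.
Qed.

End KrylovMatrix.

Lemma char_poly_conj (F : fieldType) n (P M : 'M[F]_n) : P \in unitmx ->
  char_poly (invmx P *m M *m P) = char_poly M.
Proof.
move=> Pu; rewrite /char_poly /char_poly_mx.
have e : 'X%:M = map_mx polyC (invmx P) *m 'X%:M *m map_mx polyC P :> 'M_n.
  by rewrite mul_mx_scalar -scalemxAl -map_mxM mulVmx // map_mx1 scalemx1.
rewrite {1}e !map_mxM -!mulmxA -mulmxBr -mulmxBl !det_mulmx.
by rewrite mulrCA -det_mulmx -map_mxM mulVmx // map_mx1 det1 mulr1.
Qed.

Lemma diagonalizable_char_poly_uniq (F : fieldType) n (A : 'M[F]_n.+1) rs :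
  uniq rs -> char_poly A = \prod_(x <- rs) ('X - x%:P) -> diagonalizable A.
Proof.
by move=> urs cA; apply/diagonalizableP; exists rs; rewrite // -cA mxminpoly_dvd_char.
Qed.

Lemma cyclic_square_zero_split (F : fieldType) n (A : 'M[F]_n.+1) v q :
  krylov_free A v n.+1 -> q \is monic -> size q = n.+2 ->
  q`_n = (char_poly A)`_n ->
  exists N D : 'M[F]_n.+1, [/\ A = N + D, N *m N = 0 & char_poly D = q].
Proof.
move=> vn qm sq qA; set K := krylovmx A v; pose C := @companion_mx F n.+1.
have Ku : K \in unitmx := krylovmx_unit vn.
have AK : A = invmx K *m C (char_poly A) *m K.
  by rewrite -mulmxA -krylovmx_companion mulKmx.
exists (invmx K *m (C (char_poly A) - C q) *m K), (invmx K *m C q *m K); split.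
- by rewrite {1}AK -mulmxDl -mulmxDr subrK.
- rewrite !mulmxA mulmxK // -(mulmxA (invmx K)) companion_mx_sub_sqr //.
  by rewrite mulmx0 mul0mx.
- by rewrite char_poly_conj // char_poly_companion_mx.
Qed.

Theorem proposition2p3 (F : fieldType)
  (hchar : (2 \in [pchar F])%N)
  (hcard : exists s : seq F, uniq s /\ (4 <= size s)%N)
  (B : 'M[F]_3) (hB : non_derogative B) (a : F)
  (ha1 : a != \tr B) (ha2 : a != \tr B + 1) :
  exists N D : 'M[F]_3,
    [/\ B = N + D, N *m N = 0, diagonalizable D &
        char_poly D = ('X - a%:P) * ('X - (a + 1)%:P) * ('X - (\tr B + 1)%:P)].
Proof.
pose rs := [:: a; a + 1; \tr B + 1].
have rs_uniq : uniq rs.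
  rewrite /= !inE !negb_or ha2 (inj_eq (addIr 1)) ha1 !andbT /=.
  by rewrite eq_sym -subr_eq0 addrC addKr oner_eq0.
have q2 : (\prod_(x <- rs) ('X - x%:P))`_2 = (char_poly B)`_2.
  rewrite (coefPn_prod_XsubC (isT : size rs != 0)).
  rewrite (char_poly_trace B (isT : (0 < 3)%N)) !big_cons big_nil addr0.
  have -> : a + (a + 1 + (\tr B + 1)) = \tr B + 2%:R * (a + 1) by ring.
  by rewrite (pcharf0 hchar) mul0r addr0.
have [v cyc] := non_derogative3_cyclic_vector hB.
have [N [D [BND N2 cD]]] := cyclic_square_zero_split cyc
  (monic_prod_XsubC _ _ _) (size_prod_XsubC rs id) q2.
exists N, D; split => //; first exact: diagonalizable_char_poly_uniq rs_uniq cD.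
by rewrite cD !big_cons big_nil mulr1 !mulrA.
Qed.
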